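(* All eigenvalues of the linear operator $H(\pi)$ on $\mathbb V$ (equivalently, of the $C\times C$ tridiagonal matrix with diagonal entries $-\nu_i$, subdiagonal entries $(i+1,i)\mapsto\gamma_i$ and superdiagonal entries $(i,i+1)\mapsto i$, where $\gamma_i=\sigma d\,\pi_i^{d-1}$, $\nu_i=\gamma_i+i$) are real and strictly less than $-1$.
   Context: Fix integers $C\ge1$, $d\ge1$ and a real $\sigma>0$. $\mathbb V=\{v\in\mathbb R^{C+1}:v_0=0\}$, identified with $\mathbb R^C$ via coordinates $1,\dots,C$. $\pi\in\mathbb R^{C+1}$ is the unique vector with $1=\pi_0\ge\pi_1\ge\cdots\ge\pi_C\ge0$ satisfying $\sigma(\pi_{n-1}^d-\pi_n^d)=n(\pi_n-\pi_{n+1})$ for $1\le n\le C$, $\pi_{C+1}=0$. $H(\pi)$ is the linear map $(H(\pi)b)_n=\sigma d\,\pi_{n-1}^{d-1}b_{n-1}-(\sigma d\,\pi_n^{d-1}+n)b_n+nb_{n+1}$ for $1\le n\le C$ (with $b_0=b_{C+1}:=0$). *)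

From HB Require Import structures.
From mathcomp Require Import all_boot all_order all_algebra.
From mathcomp Require Import reals.
From mathcomp Require Import complex.
Set Implicit Arguments. Unset Strict Implicit. Unset Printing Implicit Defensive.
Import Order.TTheory GRing.Theory Num.Theory.
Local Open Scope ring_scope.

(* Row/column index i : 'I_C (0-based) stands
   for coordinate n = i+1 (1 <= n <= C).  Column-vector convention:
   (H b)_n = sigma d pi_{n-1}^{d-1} b_{n-1} - (sigma d pi_n^{d-1} + n) b_n + n b_{n+1},
   so H(n, n-1) = sigma d pi_{n-1}^{d-1}, H(n,n) = -(sigma d pi_n^{d-1} + n),
   H(n, n+1) = n, other entries 0 (b_0 = b_{C+1} = 0 is automatic). *)
Definition Hmat (R : realType) (C d : nat) (sigma : R) (pi : nat -> R) : 'M[R]_C :=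
  \matrix_(i < C, j < C)
    (let n := i.+1 in let m := j.+1 in
     if m == n.-1 then sigma * d%:R * pi m ^+ d.-1
     else if m == n then - (sigma * d%:R * pi n ^+ d.-1 + n%:R)
     else if m == n.+1 then n%:R
     else 0).

Definition is_pi (R : realType) (C d : nat) (sigma : R) (pi : nat -> R) : Prop :=
  [/\ pi 0%N = 1,
      (forall n : nat, (n < C)%N -> pi n.+1 <= pi n),
      0 <= pi C,
      pi C.+1 = 0 &
      (forall n : nat, (1 <= n <= C)%N ->
         sigma * (pi n.-1 ^+ d - pi n ^+ d) = n%:R * (pi n - pi n.+1))].

From HB Require Import structures.
From mathcomp Require Import all_boot all_order all_algebra.
From mathcomp Require Import reals complex.
From mathcomp Require Import ring lra zify.
Set Implicit Arguments. Unset Strict Implicit. Unset Printing Implicit Defensive.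
Import Order.TTheory GRing.Theory Num.Theory.
Local Open Scope ring_scope.
Local Open Scope complex_scope.

(* A left eigenvector v of H(pi) with eigenvalue z, read as a sequence
   y_0 = 0, y_1, ..., y_C, y_{C+1} = 0, solves the three-term recurrence
     (m-1) y_{m-1} - (g_m + m) y_m + g_m y_{m+1} = z y_m     (1 <= m <= C)
   with g_m = gamma_m = sigma d pi_m^(d-1) > 0: this is the operator Hadj below,
   i.e. the transpose of H(pi) acting on sequences.  For ANY positive g this
   Dirichlet problem behaves like a Sturm-Liouville problem:
   - symmetrising weights w (m w_{m+1} = g_m w_m) give a discrete Lagrange
     identity; applied to Re y and Im y it yields Im z * sum w_m |y_m|^2 = 0,
     so z is real;
   - for a real eigenvalue p >= -1, a discrete maximum principle shows that a
     solution with y_0 = 0 < y_1 stays positive, so it cannot vanish at C+1.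
   The file develops these facts for arbitrary positive g, then computes the
   action of H(pi) on row vectors, shows gamma > 0 from the defining system of
   pi, and combines everything in mainTheorem8. *)

Definition Hadj {K : pzRingType} (g y : nat -> K) (m : nat) : K :=
  m.-1%:R * y m.-1 - (g m + m%:R) * y m + g m * y m.+1.

Section ComplexParts.
Variable R : realFieldType.

Lemma Re_mul (x y : R[i]) :
  complex.Re (x * y) = complex.Re x * complex.Re y - complex.Im x * complex.Im y.
Proof. by case: x y => [a b] [c e]. Qed.

Lemma Im_mul (x y : R[i]) :
  complex.Im (x * y) = complex.Re x * complex.Im y + complex.Im x * complex.Re y.
Proof. by case: x y => [a b] [c e]. Qed.

Lemma Re_Hadj (g : nat -> R) (y : nat -> R[i]) (m : nat) :
  complex.Re (Hadj (fun n => (g n)%:C) y m) = Hadj g (fun n => complex.Re (y n)) m.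
Proof.
rewrite /Hadj -!(rmorph_nat (real_complex R)).
by case: (y m.-1) (y m) (y m.+1) => [a a'] [b b'] [c c'] /=; ring.
Qed.

Lemma Im_Hadj (g : nat -> R) (y : nat -> R[i]) (m : nat) :
  complex.Im (Hadj (fun n => (g n)%:C) y m) = Hadj g (fun n => complex.Im (y n)) m.
Proof.
rewrite /Hadj -!(rmorph_nat (real_complex R)).
by case: (y m.-1) (y m) (y m.+1) => [a a'] [b b'] [c c'] /=; ring.
Qed.
End ComplexParts.

Section DirichletProblem.
Variables (R : realFieldType) (C : nat) (g : nat -> R).
Hypothesis g_pos : forall m, (1 <= m <= C)%N -> 0 < g m.

(* Since g > 0, a solution is determined by y_0, y_1: if both vanish, so does y. *)
Lemma Hadj_forward_zero (p : R) (y : nat -> R) :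
  y 0%N = 0 -> y 1%N = 0 ->
  (forall m, (1 <= m <= C)%N -> Hadj g y m = p * y m) ->
  forall m, (m <= C.+1)%N -> y m = 0.
Proof.
move=> y0 y1 eig.
suff ind m : (m <= C)%N -> y m = 0 /\ y m.+1 = 0.
  by case=> [//|m] /ind [].
elim: m => [//|m IH] le_mC; have [ym ym1] := IH (ltnW le_mC); split=> //.
have := eig m.+1; rewrite le_mC /Hadj /= ym ym1 !mulr0 subrr add0r => /(_ isT).
by move/eqP; rewrite mulf_eq0 gt_eqF ?g_pos //= => /eqP.
Qed.

(* Discrete maximum principle: for p >= -1 a solution with y_0 = 0 < y_1 is
   positive and nondecreasing, because
   g_{m+1} (y_{m+2} - y_{m+1}) = (p + 1) y_{m+1} + m (y_{m+1} - y_m). *)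
Lemma Hadj_increasing (p : R) (y : nat -> R) : -1 <= p ->
  y 0%N = 0 -> 0 < y 1%N ->
  (forall m, (1 <= m <= C)%N -> Hadj g y m = p * y m) ->
  forall m, (m <= C)%N -> 0 < y m.+1 /\ y m <= y m.+1.
Proof.
move=> p_ge y0 y1 eig; elim=> [|m IH] le_mC; first by rewrite y0 ltW.
have [ym1_gt0 ym_le] := IH (ltnW le_mC).
have gap : g m.+1 * (y m.+2 - y m.+1) = (p + 1) * y m.+1 + m%:R * (y m.+1 - y m).
  have := eig m.+1; rewrite le_mC /Hadj /= -natr1 => /(_ isT) e.
  by rewrite mulrDl mul1r -e; ring.
have : 0 <= g m.+1 * (y m.+2 - y m.+1).
  have p1_ge0 : 0 <= p + 1 by lra.
  by rewrite gap addr_ge0 // mulr_ge0 ?ler0n ?subr_ge0 // ltW.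
rewrite pmulr_rge0 ?g_pos ?le_mC // subr_ge0 => ym_ge.
by split=> //; apply: lt_le_trans ym_ge.
Qed.

(* Hence p >= -1 is not an eigenvalue of the Dirichlet problem
   y_0 = y_{C+1} = 0: the sign of y_1 propagates up to y_{C+1}. *)
Lemma Hadj_dirichlet (p : R) (y : nat -> R) : -1 <= p ->
  y 0%N = 0 -> y C.+1 = 0 ->
  (forall m, (1 <= m <= C)%N -> Hadj g y m = p * y m) ->
  forall m, (m <= C.+1)%N -> y m = 0.
Proof.
move=> p_ge y0 yC eig.
have blowup (u : nat -> R) : u 0%N = 0 -> 0 < u 1%N ->
    (forall m, (1 <= m <= C)%N -> Hadj g u m = p * u m) -> 0 < u C.+1.
  by move=> u0 u1 eigu; have [] := Hadj_increasing p_ge u0 u1 eigu (leqnn C).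
case: (ltrgt0P (y 1%N)) => [y1_gt0 | y1_lt0 | y1_eq0].
- by have := blowup y y0 y1_gt0 eig; rewrite yC ltxx.
- have eigN m : (1 <= m <= C)%N -> Hadj g (fun n => - y n) m = p * - y m.
    by move=> /eig e; rewrite mulrN -e /Hadj; ring.
  have := blowup (fun n => - y n); rewrite /= y0 yC oppr0 oppr_gt0 ltxx.
  by move=> /(_ erefl y1_lt0 eigN).
- exact: Hadj_forward_zero y1_eq0 eig.
Qed.

(* Weights w with m w_{m+1} = w_m g_m, which make the operator symmetric. *)
Fixpoint sym_weight (m : nat) : R :=
  if m is m'.+1 then (if m' is 0 then 1 else sym_weight m' * g m' / m'%:R)
  else 1.

Lemma sym_weight_rec m : (0 < m)%N -> m%:R * sym_weight m.+1 = sym_weight m * g m.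
Proof.
by case: m => [//|m] _ /=; rewrite mulrC divfK // pnatr_eq0.
Qed.

Lemma sym_weight_gt0 m : (m <= C.+1)%N -> 0 < sym_weight m.
Proof.
elim: m => [|[|m] IH] le_mC //=.
by rewrite divr_gt0 ?mulr_gt0 ?ltr0n ?IH ?g_pos // ltnW.
Qed.

Definition wronskian (a b : nat -> R) (k : nat) : R :=
  k%:R * sym_weight k.+1 * (a k * b k.+1 - a k.+1 * b k).

Lemma lagrange_identity (a b : nat -> R) m : (0 < m)%N ->
  sym_weight m * (a m * Hadj g b m - b m * Hadj g a m)
  = wronskian a b m - wronskian a b m.-1.
Proof.
case: m => [//|k] _.
by rewrite /wronskian /Hadj succnK (@sym_weight_rec k.+1) //; ring.
Qed.

(* Summing the Lagrange identity for y = a + i b with eigenvalue p + i q, the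
   boundary terms vanish and q * sum_m w_m (a_m^2 + b_m^2) = 0; so q != 0 forces
   a = b = 0. *)
Lemma coupled_trivial (p q : R) (a b : nat -> R) : q != 0 ->
  a 0%N = 0 -> b 0%N = 0 -> a C.+1 = 0 -> b C.+1 = 0 ->
  (forall m, (1 <= m <= C)%N -> Hadj g a m = p * a m - q * b m) ->
  (forall m, (1 <= m <= C)%N -> Hadj g b m = p * b m + q * a m) ->
  forall m, (1 <= m <= C)%N -> a m = 0 /\ b m = 0.
Proof.
move=> q_neq0 a0 b0 aC bC eqa eqb.
pose energy m := sym_weight m * (a m ^+ 2 + b m ^+ 2).
have energy_ge0 m : (1 <= m <= C)%N -> 0 <= energy m.
  case/andP=> _ le_mC; rewrite mulr_ge0 ?addr_ge0 ?sqr_ge0 // ltW //.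
  by rewrite sym_weight_gt0 // ltnW.
have total : q * \sum_(1 <= m < C.+1) energy m = 0.
  rewrite big_distrr /= (telescope_sumr_eq (fun k => wronskian a b k.-1)) //=.
    by rewrite /wronskian aC bC !(mulr0, mul0r, mulr0n, subrr).
  move=> m m_range; rewrite -lagrange_identity ?(leq_trans _ (andP m_range).1) //.
  by rewrite eqa ?eqb // /energy; ring.
move=> m m_range.
have /eqP := total; rewrite mulf_eq0 (negbTE q_neq0) big_seq /= psumr_eq0; last first.
  by move=> k; rewrite mem_index_iota ltnS; apply: energy_ge0.
move=> /allP/(_ m); rewrite mem_index_iota ltnS m_range => /(_ isT).
rewrite /energy mulf_eq0 gt_eqF ?sym_weight_gt0 ?leqW ?(andP m_range).2 //=.
by rewrite paddr_eq0 ?sqr_ge0 // !sqrf_eq0 => /andP[/eqP-> /eqP->].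
Qed.

(* Spectral statement for positive g: every eigenvalue z of the Dirichlet problem
   is real and < -1.  The real and imaginary parts of an eigenvector solve a
   coupled real system, to which the two facts above apply. *)
Lemma Hadj_eigenvalue (y : nat -> R[i]) (z : R[i]) :
  y 0%N = 0 -> y C.+1 = 0 ->
  (forall m, (1 <= m <= C)%N -> Hadj (fun n => (g n)%:C) y m = z * y m) ->
  (exists2 m, (1 <= m <= C)%N & y m != 0) ->
  complex.Im z = 0 /\ complex.Re z < -1.
Proof.
move=> y0 yC eig [m0 m0_range ym0_neq0].
pose a n := complex.Re (y n); pose b n := complex.Im (y n).
have eqa m : (1 <= m <= C)%N ->
    Hadj g a m = complex.Re z * a m - complex.Im z * b m.
  by move=> /eig e; rewrite -Re_Hadj e Re_mul.
have eqb m : (1 <= m <= C)%N ->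
    Hadj g b m = complex.Re z * b m + complex.Im z * a m.
  by move=> /eig e; rewrite -Im_Hadj e Im_mul.
have [a0 b0] : a 0%N = 0 /\ b 0%N = 0 by rewrite /a /b y0.
have [aC bC] : a C.+1 = 0 /\ b C.+1 = 0 by rewrite /a /b yC.
have ab_neq0 : ~ (a m0 = 0 /\ b m0 = 0).
  by rewrite /a /b; case: (y m0) ym0_neq0 => u u' /= + [u0 u'0]; rewrite u0 u'0 eqxx.
have Im_z0 : complex.Im z = 0.
  apply/eqP; apply: contraT => Im_z_neq0; exfalso; apply: ab_neq0.
  exact: (coupled_trivial Im_z_neq0 a0 b0 aC bC eqa eqb m0_range).
split=> //; rewrite ltNge; apply/negP => Re_z_ge; apply: ab_neq0.
have m0_le : (m0 <= C.+1)%N by rewrite leqW // (andP m0_range).2.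
split; [apply: (Hadj_dirichlet Re_z_ge a0 aC) m0_le
       | apply: (Hadj_dirichlet Re_z_ge b0 bC) m0_le].
- by move=> m /eqa; rewrite Im_z0 mul0r subr0.
- by move=> m /eqb; rewrite Im_z0 mul0r addr0.
Qed.

End DirichletProblem.

Lemma sum_tridiag (K : pzRingType) (n j : nat) (w : nat -> K) (A : K) (B D : nat -> K) :
  (forall k, (n <= k)%N -> w k = 0) -> (j < n)%N ->
  \sum_(i < n) w i * (if j.+1 == i then A else if j.+1 == i.+1 then B i
                      else if j.+1 == i.+2 then D i else 0)
  = w j.+1 * A + w j * B j + (if j is j'.+1 then w j' * D j' else 0).
Proof.
move=> w_out lt_jn.
have pointwise (i : 'I_n) :
    w i * (if j.+1 == i then A else if j.+1 == i.+1 then B i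
           else if j.+1 == i.+2 then D i else 0)
    = (if i == j.+1 :> nat then w i * A else 0) + (if i == j :> nat then w i * B i else 0)
      + (if i.+1 == j then w i * D i else 0).
  by repeat case: eqP => ?; rewrite ?mulr0 ?addr0 ?add0r //; lia.
rewrite (eq_bigr _ (fun i _ => pointwise i)) !big_split /= -!big_mkcond.
rewrite (big_ord1_eq _ (fun k => w k * A)) (big_ord1_eq _ (fun k => w k * B k)) lt_jn.
have -> : (if (j.+1 < n)%N then w j.+1 * A else 0) = w j.+1 * A.
  by case: ltnP => // /w_out ->; rewrite mul0r.
congr (_ + _); clear pointwise; case: j lt_jn => [|j'] lt_jn.
  by rewrite big_pred0.
under eq_bigl do rewrite eqSS.
by rewrite (big_ord1_eq _ (fun k => w k * D k)) ltnW.
Qed.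

(* A row vector v, read as the sequence 0, v_0, ..., v_(n-1), 0, 0, ...
   (1-based, padded by zeros, as the boundary problem requires). *)
Definition row_seq {K : zmodType} {n : nat} (v : 'rV[K]_n) (k : nat) : K :=
  if k is k'.+1 then (if insub k' is Some i then v 0 i else 0) else 0.

Lemma row_seqS (K : zmodType) (n : nat) (v : 'rV[K]_n) (i : 'I_n) : row_seq v i.+1 = v 0 i.
Proof. by rewrite /=; case: insubP => [j _ /val_inj -> //|]; rewrite ltn_ord. Qed.

Lemma row_seq_out (K : zmodType) (n : nat) (v : 'rV[K]_n) (k : nat) :
  (n < k)%N -> row_seq v k = 0.
Proof.
case: k => [//|k] /= lt_nk; case: insubP => // j lt_kn _.
by rewrite ltnS leqNgt lt_kn in lt_nk.
Qed.

Lemma row_seq_neq0 (K : zmodType) (n : nat) (v : 'rV[K]_n) :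
  v != 0 -> exists2 m, (1 <= m <= n)%N & row_seq v m != 0.
Proof.
move=> v_neq0; have [i vi_neq0] : exists i, v 0 i != 0.
  apply/existsP; apply: contraNT v_neq0 => /existsPn v0.
  by apply/eqP/rowP => i; rewrite mxE; apply/eqP/negPn.
by exists i.+1; rewrite ?row_seqS // ltn_ord.
Qed.

Definition gamma (R : realType) (sigma : R) (d : nat) (pi : nat -> R) (m : nat) : R :=
  sigma * d%:R * pi m ^+ d.-1.

Section Stationary.
Variables (R : realType) (C d : nat) (sigma : R) (pi : nat -> R).
Hypothesis pi_sol : is_pi C d sigma pi.

(* pi is nonnegative, by monotonicity down to pi_C >= 0. *)
Lemma is_pi_ge0 n : (n <= C.+1)%N -> 0 <= pi n.
Proof.
case: pi_sol => _ pi_noninc pi_C_ge0 pi_C1 _.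
have below_C k : (k <= C)%N -> pi C <= pi (C - k).
  elim: k => [|k IH] le_kC; first by rewrite subn0.
  apply: le_trans (IH (ltnW le_kC)) _.
  by rewrite -[in leLHS](subnSK le_kC) pi_noninc //; lia.
rewrite leq_eqVlt ltnS => /orP[/eqP-> | le_nC]; first by rewrite pi_C1.
by rewrite -(subKn le_nC) (le_trans pi_C_ge0) ?below_C ?leq_subr.
Qed.

Hypotheses (d_gt0 : (0 < d)%N) (sigma_gt0 : 0 < sigma).

(* pi is positive on 0..C: if pi_{n+1} = 0 with pi_n > 0, the defining equation
   at n+1 would equate sigma pi_n^d > 0 with -(n+1) pi_{n+2} <= 0. *)
Lemma is_pi_gt0 n : (n <= C)%N -> 0 < pi n.
Proof.
case: (pi_sol) => pi0 _ _ _ pi_eq.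
elim: n => [|n IH] le_nC; first by rewrite pi0 ltr01.
rewrite lt_def is_pi_ge0 ?leqW // andbT; apply/eqP => pi_n1.
have := pi_eq n.+1; rewrite le_nC /= pi_n1 expr0n eqn0Ngt d_gt0 /= subr0 sub0r => /(_ isT).
have : 0 < sigma * pi n ^+ d by rewrite mulr_gt0 // exprn_gt0 // IH // ltnW.
have : 0 <= n.+1%:R * pi n.+2 by rewrite mulr_ge0 ?ler0n ?is_pi_ge0.
lra.
Qed.

Lemma gamma_gt0 m : (m <= C)%N -> 0 < gamma sigma d pi m.
Proof. by move=> le_mC; rewrite mulr_gt0 ?mulr_gt0 ?ltr0n ?exprn_gt0 ?is_pi_gt0. Qed.

End Stationary.

Lemma Hmat_row_action (R : realType) (C d : nat) (sigma : R) (pi : nat -> R)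
    (v : 'rV[R[i]]_C) (j : 'I_C) :
  (v *m map_mx (fun x : R => x%:C) (Hmat C d sigma pi)) 0 j
  = Hadj (fun m => (gamma sigma d pi m)%:C) (row_seq v) j.+1.
Proof.
rewrite !mxE; under eq_bigr => i _ do rewrite !mxE /= -row_seqS !(fun_if (real_complex R)) rmorph0.
rewrite (@sum_tridiag _ C j (fun k => row_seq v k.+1) _
  (fun k => (- (gamma sigma d pi k.+1 + k.+1%:R))%:C) (fun k => (k.+1%:R)%:C))
  ?ltn_ord //; last first.
  by move=> k le_Ck; rewrite row_seq_out.
rewrite /Hadj /gamma rmorphN rmorphD !rmorph_nat.
case: (nat_of_ord j) => [|j'] /=; first by rewrite mul0r; ring.
by rewrite rmorph_nat; ring.
Qed.

(* A left eigenvector of H(pi) yields, after padding, an eigenvector of the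
   Dirichlet problem for Hadj gamma, with gamma > 0. *)
Theorem mainTheorem8 (R : realType) (C d : nat) (sigma : R) (pi : nat -> R) :
  (1 <= C)%N -> (1 <= d)%N -> 0 < sigma -> is_pi C d sigma pi ->
  forall z : R[i],
    eigenvalue (map_mx (fun x : R => x%:C) (Hmat C d sigma pi)) z ->
    complex.Im z = 0 /\ complex.Re z < -1.
Proof.
move=> _ d_gt0 sigma_gt0 pi_sol z /eigenvalueP [v eig v_neq0].
apply: (@Hadj_eigenvalue _ C (gamma sigma d pi) _ (row_seq v)).
- by move=> m /andP[_ le_mC]; apply: (gamma_gt0 pi_sol d_gt0 sigma_gt0 le_mC).
- by [].
- exact: row_seq_out.
- move=> [//|j] /andP[_ lt_jC].
  move/rowP: eig => /(_ (Ordinal lt_jC)).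
  by rewrite Hmat_row_action mxE -(row_seqS v (Ordinal lt_jC)).
- exact: row_seq_neq0.
Qed.
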